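(* The set of points of exact period $5$ under $G$ lies on the curve $P_5(u,v)=0$, where \begin{align*} P_5(u,v)={}&-3u^5v^6+3u^4v^2-u^7v^2+uv^3-u^6v-u^5v+2u^3v-4u^3v^2-2uv^4+2u^4v\\ &+6u^2v^4+2u^7v^3-u^7v^4+u^4v^7+v^5+v^7+u^6v^2+6u^2v^7+2v^6+3u^6v^5\\ &+u^3+4uv^7+4u^3v^7-12u^4v^6+14u^5v^5-8u^6v^4-16u^3v^6-5u^5v^3-12u^5v^4\\ &+5u^6v^3+18u^4v^5+19u^3v^4-6u^2v^6+3uv^6+6u^4v^4-16u^4v^3+7u^5v^2\\ &-4uv^5-12u^2v^5-5u^3v^3-2u^2v^2+4u^2v^3, \end{align*} and the Zariski closure in $\mathbb{C}^2$ of this set is this curve (this is the equation of period five orbits on the $(u,v)$-plane).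
   Context: Let \[ G(u,v)=\left(\frac{-u+v+uv}{u},\ \frac{u^{2}-u+v-u^{2}v-uv+uv^{2}+v^{2}}{u}\right), \] defined for $(u,v)\in\mathbb{C}^2$ with $u\neq 0$. A point $(u,v)$ has exact period $n$ under $G$ if the iterates $G^k(u,v)$, $0\le k\le n-1$, all have nonzero first coordinate, $G^n(u,v)=(u,v)$, and $G^k(u,v)\neq(u,v)$ for $0<k<n$. *)

From HB Require Import structures.
From mathcomp Require Import all_boot all_order all_algebra.
From mathcomp Require Import complex.
From mathcomp Require Import Rstruct.
Set Implicit Arguments. Unset Strict Implicit. Unset Printing Implicit Defensive.
Import Order.TTheory GRing.Theory Num.Theory.
Local Open Scope ring_scope.

Definition CC : Type := complex Stdlib.Reals.Rdefinitions.R.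

(* The map G; outside u <> 0 the value is a junk value (x/0 = 0 in MathComp),
   never used since exact_period requires nonzero first coordinates. *)
Definition G (p : CC * CC) : CC * CC :=
  let u := p.1 in let v := p.2 in
  ((- u + v + u * v) / u,
   (u ^+ 2 - u + v - u ^+ 2 * v - u * v + u * v ^+ 2 + v ^+ 2) / u).

Definition exact_period (n : nat) (p : CC * CC) : Prop :=
  (forall k, (k < n)%N -> (iter k G p).1 != 0) /\
  iter n G p = p /\
  (forall k, (0 < k < n)%N -> iter k G p <> p).

Definition P5 (u v : CC) : CC :=
  - 3 * u^+5 * v^+6 + 3 * u^+4 * v^+2 - u^+7 * v^+2 + u * v^+3 - u^+6 * v
  - u^+5 * v + 2 * u^+3 * v - 4 * u^+3 * v^+2 - 2 * u * v^+4 + 2 * u^+4 * v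
  + 6 * u^+2 * v^+4 + 2 * u^+7 * v^+3 - u^+7 * v^+4 + u^+4 * v^+7 + v^+5 + v^+7
  + u^+6 * v^+2 + 6 * u^+2 * v^+7 + 2 * v^+6 + 3 * u^+6 * v^+5
  + u^+3 + 4 * u * v^+7 + 4 * u^+3 * v^+7 - 12 * u^+4 * v^+6 + 14 * u^+5 * v^+5
  - 8 * u^+6 * v^+4 - 16 * u^+3 * v^+6 - 5 * u^+5 * v^+3 - 12 * u^+5 * v^+4
  + 5 * u^+6 * v^+3 + 18 * u^+4 * v^+5 + 19 * u^+3 * v^+4 - 6 * u^+2 * v^+6
  + 3 * u * v^+6 + 6 * u^+4 * v^+4 - 16 * u^+4 * v^+3 + 7 * u^+5 * v^+2
  - 4 * u * v^+5 - 12 * u^+2 * v^+5 - 5 * u^+3 * v^+3 - 2 * u^+2 * v^+2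
  + 4 * u^+2 * v^+3.

(* Bivariate polynomials over CC, as {poly {poly CC}}: the inner variable is u,
   the outer variable is v. *)
Definition eval2 (q : {poly {poly CC}}) (p : CC * CC) : CC :=
  (q.[p.2%:P]).[p.1].

Definition zariski_closure (S : CC * CC -> Prop) (x : CC * CC) : Prop :=
  forall q : {poly {poly CC}},
    (forall s, S s -> eval2 q s = 0) -> eval2 q x = 0.

From HB Require Import structures.
From mathcomp Require Import all_boot all_order all_algebra.
From mathcomp Require Import complex Rstruct ring.
Import Order.TTheory GRing.Theory Num.Theory.
Local Open Scope ring_scope.
Set Implicit Arguments. Unset Strict Implicit.

(* Put (u, v) = (t1/t0, (t1/t0)(1 + t0)).  In these coordinates G becomes the
   recurrence t_{k+2} = t_{k+1} (t_{k+1} + t_k^2 + t_k t_{k+1}) / t_k, and P5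
   becomes, up to monomial factors, a polynomial P5t(t0, t1) that is invariant
   along the recurrence.  Polynomial identities show that, as long as no term
   vanishes, t5 = t0 and t6 = t1 exactly when P5t(t0, t1) = 0.  Since 5 is prime
   and the fixed points of G lie on the diagonal, the points of exact period 5
   are the points of the curve P5 = 0 off the lines u = 0 and u = v.
   Every point of the curve is a limit of such points: on the line u - 2v = x,
   P5 is a polynomial of degree 11 in v with constant leading coefficient, so
   it has a root near v when x is near u - 2v, and all but finitely many x
   avoid the lines u = 0 and u = v.  As polynomials are continuous, any
   polynomial vanishing at the points of period 5 vanishes on the curve. *)

Section PrimePeriod.
Variables (T : Type) (f : T -> T) (x : T).

Lemma iter_gcdn_fixed m n :
  iter m f x = x -> iter n f x = x -> iter (gcdn m n) f x = x.
Proof.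
move=> fm fn; case: (posnP m) => [-> | m_gt0]; first by rewrite gcd0n.
have [a _ /dvdnP[c def_c]] := Bezoutl n m_gt0.
have fan : iter (a * n) f x = x by rewrite iterM iter_fix.
by rewrite -[in RHS](iter_fix c fm) -iterM -def_c iterD fan.
Qed.

Lemma prime_period p : prime p -> iter p f x = x -> f x <> x ->
  forall k, (0 < k < p)%N -> iter k f x <> x.
Proof.
move=> p_pr fp fx k /andP[k_gt0 k_lt_p] fk; apply: fx.
have : coprime k p by rewrite coprime_sym prime_coprime // gtnNdvd.
by move/eqP => kp1; rewrite -[RHS](iter_gcdn_fixed fk fp) kp1.
Qed.

End PrimePeriod.

Section Continuity.
Variable R : numFieldType.
Implicit Types (u v : R) (f g : R -> R -> R).

Definition continuous2_at f u v := forall e, 0 < e ->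
  exists2 d, 0 < d & forall x y, `|x - u| < d -> `|y - v| < d ->
    `|f x y - f u v| < e.

Lemma exists_pos_le2 (a b : R) : 0 < a -> 0 < b ->
  exists2 c, 0 < c & c <= a /\ c <= b.
Proof.
move=> a0 b0; case/orP: (real_leVge (gtr0_real a0) (gtr0_real b0)) => [ab | ba].
  by exists a.
by exists b.
Qed.

Lemma continuous2_at_eq f g u v : f =2 g ->
  continuous2_at f u v -> continuous2_at g u v.
Proof.
move=> fg cf e e0; have [d d0 near_f] := cf e e0.
by exists d => // x y xu yv; rewrite -!fg near_f.
Qed.

Lemma continuous2_at_cst (c : R) u v : continuous2_at (fun _ _ => c) u v.
Proof. by move=> e e0; exists 1 => // x y _ _; rewrite subrr normr0. Qed.

Lemma continuous2_at_fst u v : continuous2_at (fun x _ => x) u v.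
Proof. by move=> e e0; exists e. Qed.

Lemma continuous2_at_snd u v : continuous2_at (fun _ y => y) u v.
Proof. by move=> e e0; exists e. Qed.

Lemma continuous2_atD f g u v : continuous2_at f u v -> continuous2_at g u v ->
  continuous2_at (fun x y => f x y + g x y) u v.
Proof.
move=> cf cg e e0; have e20 : 0 < e / 2 by rewrite divr_gt0.
have [d1 d1_0 near_f] := cf _ e20; have [d2 d2_0 near_g] := cg _ e20.
have [d d0 [dd1 dd2]] := exists_pos_le2 d1_0 d2_0.
exists d => // x y xu yv.
have df := near_f x y (lt_le_trans xu dd1) (lt_le_trans yv dd1).
have dg := near_g x y (lt_le_trans xu dd2) (lt_le_trans yv dd2).
rewrite (_ : _ - _ = (f x y - f u v) + (g x y - g u v)); last by ring.
by apply: le_lt_trans (ler_normD _ _) _; rewrite [e]splitr ltrD.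
Qed.

Lemma continuous2_atM f g u v : continuous2_at f u v -> continuous2_at g u v ->
  continuous2_at (fun x y => f x y * g x y) u v.
Proof.
move=> cf cg e e0; set M := 1 + `|f u v| + `|g u v|.
have M0 : 0 < M by rewrite /M -addrA ltr_wpDr // addr_ge0.
have e2M0 : 0 < e / 2 / M by rewrite !divr_gt0.
have [e1 e1_0 [e1_le1 e1_le]] := exists_pos_le2 ltr01 e2M0.
have [d1 d1_0 near_f] := cf _ e1_0; have [d2 d2_0 near_g] := cg _ e1_0.
have [d d0 [dd1 dd2]] := exists_pos_le2 d1_0 d2_0.
exists d => // x y xu yv.
have /ltW df := near_f x y (lt_le_trans xu dd1) (lt_le_trans yv dd1).
have /ltW dg := near_g x y (lt_le_trans xu dd2) (lt_le_trans yv dd2).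
set A := f x y - f u v in df *; set B := g x y - g u v in dg *.
rewrite (_ : _ - _ = A * B + f u v * B + g u v * A); last first.
  by rewrite /A /B; ring.
apply: le_lt_trans (ler_normD _ _) _.
apply: le_lt_trans (lerD (ler_normD _ _) (lexx _)) _; rewrite !normrM.
have bound : `|A| * `|B| + `|f u v| * `|B| + `|g u v| * `|A| <= e1 * M.
  rewrite (_ : e1 * M = 1 * e1 + `|f u v| * e1 + `|g u v| * e1); last first.
    by rewrite /M; ring.
  apply: lerD; first apply: lerD; try by apply: ler_wpM2l.
  by apply: ler_pM => //; apply: le_trans e1_le1.
apply: le_lt_trans bound _; rewrite ler_pdivlMr // in e1_le.
by apply: le_lt_trans e1_le _; rewrite ltr_pdivrMr // ltr_pMr // ltr1n.
Qed.

Lemma continuous2_at_horner (p : {poly R}) u v :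
  continuous2_at (fun x _ => p.[x]) u v.
Proof.
elim/poly_ind: p => [|p c IH].
  apply: (@continuous2_at_eq (fun _ _ => 0)); last exact: continuous2_at_cst.
  by move=> x y; rewrite horner0.
apply: (@continuous2_at_eq (fun x _ => p.[x] * x + c)).
  by move=> x y; rewrite hornerMXaddC.
apply: continuous2_atD (continuous2_at_cst _ _ _).
exact: continuous2_atM (continuous2_at_fst _ _).
Qed.

Lemma continuous2_at_horner2 (q : {poly {poly R}}) u v :
  continuous2_at (fun x y => q.[y%:P].[x]) u v.
Proof.
elim/poly_ind: q => [|q c IH].
  apply: (@continuous2_at_eq (fun _ _ => 0)); last exact: continuous2_at_cst.
  by move=> x y; rewrite !horner0.
apply: (@continuous2_at_eq (fun x y => q.[y%:P].[x] * y + c.[x])).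
  by move=> x y; rewrite hornerMXaddC hornerD hornerM hornerC.
apply: continuous2_atD (continuous2_at_horner _ _ _).
exact: continuous2_atM (continuous2_at_snd _ _).
Qed.

End Continuity.

Lemma exists_nonroot_near (R : numFieldType) (h : {poly R}) (x0 r : R) :
  h != 0 -> 0 < r -> exists2 x, `|x - x0| < r & ~~ root h x.
Proof.
move=> h0 r0; have r_neq0 : r != 0 by rewrite gt_eqF.
pose s := [seq x0 + r / i.+2%:R | i <- iota 0 (size h)].
have s_uniq : uniq s.
  rewrite map_inj_uniq ?iota_uniq // => i j /addrI /(mulfI r_neq0) /invr_inj.
  by move/eqP; rewrite eqr_nat => /eqP [].
have [s_roots | /allPn[_ /mapP[i _ ->] nonroot]] := boolP (all (root h) s).
  by have := max_poly_roots h0 s_roots s_uniq; rewrite size_map size_iota ltnn.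
exists (x0 + r / i.+2%:R) => //; have i0 : 0 < i.+2%:R :> R by rewrite ltr0n.
rewrite addrC addKr ger0_norm; last by rewrite ltW // divr_gt0.
by rewrite ltr_pdivrMr // ltr_pMr // ltr1n.
Qed.

Lemma exists_root_near (R : numClosedFieldType) (p : {poly R}) n (v r : R) :
  size p = n.+1 -> 0 < r -> `|p.[v]| < `|lead_coef p| * r ^+ n ->
  exists2 w, root p w & `|w - v| < r.
Proof.
move=> p_size r0 small; have [zs p_fact] := closed_field_poly_normal p.
have lc0 : lead_coef p != 0 by rewrite lead_coef_eq0 -size_poly_eq0 p_size.
have zs_size : size zs = n.
  by move: p_size; rewrite p_fact size_scale // size_prod_XsubC => -[].
have [/hasP[w wzs near_w] | /hasPn far] :=
  boolP (has (fun w : R => `|w - v| < r) zs).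
  by exists w; rewrite // p_fact rootZ // root_prod_XsubC.
suff /(lt_le_trans small) : `|lead_coef p| * r ^+ n <= `|p.[v]| by rewrite ltxx.
rewrite {2}p_fact hornerZ horner_prod normrM normr_prod ler_wpM2l //.
rewrite -zs_size -[size zs]count_predT -iter_mulr_1 -big_const_seq.
rewrite !big_seq ler_prod // => z zzs.
rewrite hornerXsubC ltW //= distrC.
by rewrite (real_leNgt (gtr0_real r0) (normr_real _)); have := far z zzs.
Qed.

Section Recurrence.
Variable R : fieldType.
Implicit Types a b x y : R.

Definition tnext x y := y * (y + x ^+ 2 + x * y) / x.

Fixpoint tseq a b k :=
  match k with
  | 0 => a
  | 1 => b
  | (k'.+1 as k1).+1 => tnext (tseq a b k') (tseq a b k1)
  end.

Lemma tseqSS a b k : tseq a b k.+2 = tnext (tseq a b k) (tseq a b k.+1).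
Proof. by []. Qed.

Definition P5t a b : R :=
  b^+6 + 2*b^+7 + b^+8 + a*b^+4 + 3*a*b^+5 + 8*a*b^+6 + 10*a*b^+7 + 4*a*b^+8
  + a^+2*b^+3 + 6*a^+2*b^+4 + 16*a^+2*b^+5 + 27*a^+2*b^+6 + 22*a^+2*b^+7
  + 6*a^+2*b^+8 + a^+3*b^+2 + 6*a^+3*b^+3 + 19*a^+3*b^+4 + 39*a^+3*b^+5
  + 48*a^+3*b^+6 + 26*a^+3*b^+7 + 4*a^+3*b^+8 + a^+4*b + 3*a^+4*b^+2
  + 14*a^+4*b^+3 + 35*a^+4*b^+4 + 56*a^+4*b^+5 + 48*a^+4*b^+6 + 16*a^+4*b^+7
  + a^+4*b^+8 + a^+5 + a^+5*b + 6*a^+5*b^+2 + 19*a^+5*b^+3 + 39*a^+5*b^+4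
  + 48*a^+5*b^+5 + 26*a^+5*b^+6 + 4*a^+5*b^+7 + a^+6*b + 6*a^+6*b^+2
  + 16*a^+6*b^+3 + 27*a^+6*b^+4 + 22*a^+6*b^+5 + 6*a^+6*b^+6 + a^+7*b
  + 3*a^+7*b^+2 + 8*a^+7*b^+3 + 10*a^+7*b^+4 + 4*a^+7*b^+5 + a^+8*b^+2
  + 2*a^+8*b^+3 + a^+8*b^+4.
(* The cofactors and Bezout multipliers below were found by computer algebra. *)
Definition inv_cofactor a b : R :=
  b^+10 + 2*b^+11 + b^+12 + a*b^+8 + 3*a*b^+9 + 8*a*b^+10 + 10*a*b^+11
  + 4*a*b^+12 + a^+2*b^+7 + 6*a^+2*b^+8 + 16*a^+2*b^+9 + 27*a^+2*b^+10
  + 22*a^+2*b^+11 + 6*a^+2*b^+12 + a^+3*b^+5 + a^+3*b^+6 + 6*a^+3*b^+7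
  + 19*a^+3*b^+8 + 39*a^+3*b^+9 + 48*a^+3*b^+10 + 26*a^+3*b^+11 + 4*a^+3*b^+12
  + a^+4*b^+5 + 3*a^+4*b^+6 + 14*a^+4*b^+7 + 35*a^+4*b^+8 + 56*a^+4*b^+9
  + 48*a^+4*b^+10 + 16*a^+4*b^+11 + a^+4*b^+12 + a^+5*b^+5 + 6*a^+5*b^+6
  + 19*a^+5*b^+7 + 39*a^+5*b^+8 + 48*a^+5*b^+9 + 26*a^+5*b^+10 + 4*a^+5*b^+11
  + a^+6*b^+5 + 6*a^+6*b^+6 + 16*a^+6*b^+7 + 27*a^+6*b^+8 + 22*a^+6*b^+9
  + 6*a^+6*b^+10 + a^+7*b^+5 + 3*a^+7*b^+6 + 8*a^+7*b^+7 + 10*a^+7*b^+8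
  + 4*a^+7*b^+9 + a^+8*b^+6 + 2*a^+8*b^+7 + a^+8*b^+8.
Definition cofactor5 a b : R :=
  b^+7 + 3*b^+8 + 3*b^+9 + b^+10 + a*b^+5 + 4*a*b^+6 + 13*a*b^+7 + 23*a*b^+8
  + 18*a*b^+9 + 5*a*b^+10 + a^+2*b^+4 + 9*a^+2*b^+5 + 30*a^+2*b^+6
  + 65*a^+2*b^+7 + 80*a^+2*b^+8 + 47*a^+2*b^+9 + 10*a^+2*b^+10 + a^+3*b^+2
  + 2*a^+3*b^+3 + 10*a^+3*b^+4 + 42*a^+3*b^+5 + 107*a^+3*b^+6 + 175*a^+3*b^+7
  + 159*a^+3*b^+8 + 68*a^+3*b^+9 + 10*a^+3*b^+10 - a^+4*b + 2*a^+4*b^+2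
  + 8*a^+4*b^+3 + 37*a^+4*b^+4 + 115*a^+4*b^+5 + 231*a^+4*b^+6 + 288*a^+4*b^+7
  + 192*a^+4*b^+8 + 57*a^+4*b^+9 + 5*a^+4*b^+10 - a^+5*b + 4*a^+5*b^+2
  + 21*a^+5*b^+3 + 81*a^+5*b^+4 + 200*a^+5*b^+5 + 321*a^+5*b^+6
  + 300*a^+5*b^+7 + 140*a^+5*b^+8 + 26*a^+5*b^+9 + a^+5*b^+10 - a^+6
  + 7*a^+6*b^+2 + 37*a^+6*b^+3 + 115*a^+6*b^+4 + 231*a^+6*b^+5 + 288*a^+6*b^+6
  + 192*a^+6*b^+7 + 57*a^+6*b^+8 + 5*a^+6*b^+9 + a^+7*b + 10*a^+7*b^+2
  + 42*a^+7*b^+3 + 107*a^+7*b^+4 + 175*a^+7*b^+5 + 159*a^+7*b^+6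
  + 68*a^+7*b^+7 + 10*a^+7*b^+8 + a^+8*b + 9*a^+8*b^+2 + 30*a^+8*b^+3
  + 65*a^+8*b^+4 + 80*a^+8*b^+5 + 47*a^+8*b^+6 + 10*a^+8*b^+7 + a^+9*b
  + 4*a^+9*b^+2 + 13*a^+9*b^+3 + 23*a^+9*b^+4 + 18*a^+9*b^+5 + 5*a^+9*b^+6
  + a^+10*b^+2 + 3*a^+10*b^+3 + 3*a^+10*b^+4 + a^+10*b^+5.
Definition cofactor6 a b : R :=
  b^+6 + 2*b^+7 + b^+8 + a*b^+4 + 3*a*b^+5 + 8*a*b^+6 + 10*a*b^+7 + 4*a*b^+8
  - a^+2*b^+3 + 4*a^+2*b^+4 + 16*a^+2*b^+5 + 27*a^+2*b^+6 + 22*a^+2*b^+7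
  + 6*a^+2*b^+8 - a^+3*b - a^+3*b^+2 + 15*a^+3*b^+4 + 39*a^+3*b^+5
  + 48*a^+3*b^+6 + 26*a^+3*b^+7 + 4*a^+3*b^+8 + a^+4 - a^+4*b - 3*a^+4*b^+2
  + 6*a^+4*b^+3 + 33*a^+4*b^+4 + 56*a^+4*b^+5 + 48*a^+4*b^+6 + 16*a^+4*b^+7
  + a^+4*b^+8 - a^+5*b + 15*a^+5*b^+3 + 39*a^+5*b^+4 + 48*a^+5*b^+5
  + 26*a^+5*b^+6 + 4*a^+5*b^+7 - a^+6*b + 4*a^+6*b^+2 + 16*a^+6*b^+3
  + 27*a^+6*b^+4 + 22*a^+6*b^+5 + 6*a^+6*b^+6 + a^+7*b + 3*a^+7*b^+2
  + 8*a^+7*b^+3 + 10*a^+7*b^+4 + 4*a^+7*b^+5 + a^+8*b^+2 + 2*a^+8*b^+3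
  + a^+8*b^+4.
Definition bezout5 a b : R :=
  - 3*b^+6 - 5*b^+7 - 2*b^+8 - 3*a*b^+4 - 8*a*b^+5 - 21*a*b^+6 - 23*a*b^+7
  - 7*a*b^+8 + 3*a^+2*b^+3 - 12*a^+2*b^+4 - 41*a^+2*b^+5 - 65*a^+2*b^+6
  - 45*a^+2*b^+7 - 8*a^+2*b^+8 + 3*a^+3*b + 2*a^+3*b^+2 - a^+3*b^+3
  - 42*a^+3*b^+4 - 95*a^+3*b^+5 - 106*a^+3*b^+6 - 44*a^+3*b^+7 - 2*a^+3*b^+8
  - 3*a^+4 + 3*a^+4*b + 7*a^+4*b^+2 - 19*a^+4*b^+3 - 86*a^+4*b^+4
  - 129*a^+4*b^+5 - 93*a^+4*b^+6 - 17*a^+4*b^+7 + 2*a^+4*b^+8 + a^+5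
  + 3*a^+5*b - 3*a^+5*b^+2 - 42*a^+5*b^+3 - 95*a^+5*b^+4 - 102*a^+5*b^+5
  - 38*a^+5*b^+6 + 3*a^+5*b^+7 + a^+5*b^+8 - a^+6 + 3*a^+6*b - 13*a^+6*b^+2
  - 42*a^+6*b^+3 - 62*a^+6*b^+4 - 39*a^+6*b^+5 - a^+6*b^+6 + 3*a^+6*b^+7
  - 4*a^+7*b - 8*a^+7*b^+2 - 20*a^+7*b^+3 - 21*a^+7*b^+4 - 3*a^+7*b^+5
  + 3*a^+7*b^+6 - 3*a^+8*b^+2 - 5*a^+8*b^+3 - a^+8*b^+4 + a^+8*b^+5.
Definition bezout6 a b : R :=
  3*b^+7 + 8*b^+8 + 7*b^+9 + 2*b^+10 + 3*a*b^+5 + 11*a*b^+6 + 35*a*b^+7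
  + 57*a*b^+8 + 39*a*b^+9 + 9*a*b^+10 + 3*a^+2*b^+4 + 25*a^+2*b^+5
  + 79*a^+2*b^+6 + 164*a^+2*b^+7 + 184*a^+2*b^+8 + 92*a^+2*b^+9
  + 15*a^+2*b^+10 + 3*a^+3*b^+2 + 5*a^+3*b^+3 + 28*a^+3*b^+4 + 111*a^+3*b^+5
  + 270*a^+3*b^+6 + 416*a^+3*b^+7 + 335*a^+3*b^+8 + 114*a^+3*b^+9
  + 10*a^+3*b^+10 - 3*a^+4*b + 6*a^+4*b^+2 + 20*a^+4*b^+3 + 99*a^+4*b^+4
  + 293*a^+4*b^+5 + 559*a^+4*b^+6 + 639*a^+4*b^+7 + 357*a^+4*b^+8
  + 71*a^+4*b^+9 - 2*a^+5*b + 12*a^+5*b^+2 + 56*a^+5*b^+3 + 211*a^+5*b^+4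
  + 493*a^+5*b^+5 + 740*a^+5*b^+6 + 605*a^+5*b^+7 + 208*a^+5*b^+8
  + 11*a^+5*b^+9 - 3*a^+5*b^+10 - 3*a^+6 + a^+6*b + 21*a^+6*b^+2
  + 101*a^+6*b^+3 + 293*a^+6*b^+4 + 551*a^+6*b^+5 + 620*a^+6*b^+6
  + 328*a^+6*b^+7 + 45*a^+6*b^+8 - 10*a^+6*b^+9 - a^+6*b^+10 + a^+7 + 4*a^+7*b
  + 31*a^+7*b^+2 + 114*a^+7*b^+3 + 266*a^+7*b^+4 + 400*a^+7*b^+5
  + 304*a^+7*b^+6 + 76*a^+7*b^+7 - 12*a^+7*b^+8 - 4*a^+7*b^+9 + a^+8
  + 4*a^+8*b + 28*a^+8*b^+2 + 80*a^+8*b^+3 + 158*a^+8*b^+4 + 169*a^+8*b^+5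
  + 67*a^+8*b^+6 - 6*a^+8*b^+7 - 6*a^+8*b^+8 + 4*a^+9*b + 12*a^+9*b^+2
  + 34*a^+9*b^+3 + 54*a^+9*b^+4 + 31*a^+9*b^+5 - a^+9*b^+6 - 4*a^+9*b^+7
  + 3*a^+10*b^+2 + 8*a^+10*b^+3 + 6*a^+10*b^+4 - a^+10*b^+6.

Definition tfactor2 a b : R := b + a ^+ 2 + a * b.
Definition tfactor3 a b : R :=
  b + b ^+ 2 + 2 * a * b + a * b ^+ 2 + a ^+ 2 + a ^+ 2 * b.

Lemma P5t_x0 x : P5t x 0 = x ^+ 5.
Proof. by rewrite /P5t; ring. Qed.

Lemma P5t_tnext x y : x != 0 ->
  P5t y (tnext x y) * x ^+ 8 = P5t x y * inv_cofactor x y.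
Proof. by move=> x0; rewrite /P5t /inv_cofactor /tnext; field. Qed.

Lemma bezout_cofactor56 a b :
  bezout5 a b * cofactor5 a b + bezout6 a b * cofactor6 a b = 2 * a ^+ 12.
Proof. by rewrite /bezout5 /bezout6 /cofactor5 /cofactor6; ring. Qed.

Lemma tnext_P5t x y : x != 0 -> y != 0 -> P5t x y = 0 ->
  tnext x y != 0 /\ P5t y (tnext x y) = 0.
Proof.
move=> x0 y0 P0.
have P1 : P5t y (tnext x y) = 0.
  apply/eqP; have := P5t_tnext y x0; rewrite P0 mul0r => /eqP.
  by rewrite mulf_eq0 expf_eq0 (negbTE x0) andbF orbF.
split=> //; apply: contra_eq_neq P1 => ->.
by rewrite P5t_x0 expf_neq0.
Qed.

Lemma tseq_neq0 a b : a != 0 -> b != 0 -> P5t a b = 0 ->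
  forall k, tseq a b k != 0.
Proof.
move=> a0 b0 P0.
suff inv k : [/\ tseq a b k != 0, tseq a b k.+1 != 0
               & P5t (tseq a b k) (tseq a b k.+1) = 0].
  by move=> k; case: (inv k).
elim: k => [|k [tk0 tk1 Pk]] //; have [tk2 Pk1] := tnext_P5t tk0 tk1 Pk.
by rewrite tseqSS.
Qed.

Lemma tseq2E a b : tseq a b 2 = b * tfactor2 a b / a.
Proof. by []. Qed.

Lemma tseq3E a b : a != 0 -> b != 0 ->
  tseq a b 3 = tseq a b 2 * tfactor3 a b / a.
Proof. by move=> a0 b0; rewrite /= /tnext /tfactor3; field; rewrite a0 b0. Qed.

Lemma tseq5_subE a b : a != 0 -> b != 0 ->
    tfactor2 a b != 0 -> tfactor3 a b != 0 ->
  tseq a b 5 - a = P5t a b * cofactor5 a b / (a ^+ 8 * tfactor3 a b).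
Proof.
move=> a0 b0; rewrite /tfactor2 /tfactor3 => f2 f3.
have t3den :
    b * (b + a ^+ 2 + a * b) + b ^+ 2 * a + b * (b * (b + a ^+ 2 + a * b))
    = b * (b + b ^+ 2 + 2 * a * b + a * b ^+ 2 + a ^+ 2 + a ^+ 2 * b) by ring.
rewrite /= /tnext /P5t /cofactor5; field.
by rewrite a0 b0 f2 f3 t3den mulf_neq0.
Qed.

Lemma tseq6_num_subE a b : a != 0 -> b != 0 -> tfactor2 a b != 0 ->
  a * (a + tseq a b 4 ^+ 2 + tseq a b 4 * a) - b * tseq a b 4
  = P5t a b * cofactor6 a b / a ^+ 7.
Proof.
move=> a0 b0; rewrite /tfactor2 => f2 /=.
by rewrite /tnext /P5t /cofactor6; field; rewrite a0 b0 f2.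
Qed.

Lemma tseq_period5P a b : (2 : R) != 0 ->
    (forall j, (j <= 4)%N -> tseq a b j != 0) ->
  tseq a b 5 = a /\ tseq a b 6 = b <-> P5t a b = 0.
Proof.
move=> two0 t_neq0.
have a0 : a != 0 := t_neq0 0%N isT.
have b0 : b != 0 := t_neq0 1%N isT.
have t2_0 := t_neq0 2%N isT; have t3_0 := t_neq0 3%N isT.
have t4_0 := t_neq0 4%N isT.
have f2 : tfactor2 a b != 0.
  by apply: contra_neq t2_0; rewrite tseq2E => ->; rewrite mulr0 mul0r.
have f3 : tfactor3 a b != 0.
  by apply: contra_neq t3_0; rewrite tseq3E // => ->; rewrite mulr0 mul0r.
have E5 := tseq5_subE a0 b0 f2 f3.
have E6 := tseq6_num_subE a0 b0 f2.
set t4 := tseq a b 4 in E6 t4_0.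
have t6E : tseq a b 5 = a -> tseq a b 6 = a * (a + t4 ^+ 2 + t4 * a) / t4.
  by move=> t5a; rewrite tseqSS t5a.
split=> [[t5a t6b] | P0].
- have Z5 : P5t a b * cofactor5 a b = 0.
    have den0 : a ^+ 8 * tfactor3 a b != 0 by rewrite mulf_neq0 ?expf_neq0.
    apply/eqP; move: E5; rewrite t5a subrr => /esym/eqP.
    by rewrite mulf_eq0 invr_eq0 (negbTE den0) orbF.
  have Z6 : P5t a b * cofactor6 a b = 0.
    apply/eqP; move: E6; rewrite -[a * _](divfK t4_0) -t6E // t6b subrr.
    move=> /esym/eqP; rewrite mulf_eq0 invr_eq0 expf_eq0 (negbTE a0).
    by rewrite andbF orbF.
  apply/eqP; apply: contraT => P_neq0.
  have c5 : cofactor5 a b = 0.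
    by apply/eqP; move/eqP: Z5; rewrite mulf_eq0 (negbTE P_neq0).
  have c6 : cofactor6 a b = 0.
    by apply/eqP; move/eqP: Z6; rewrite mulf_eq0 (negbTE P_neq0).
  have /eqP := bezout_cofactor56 a b; rewrite c5 c6 !mulr0 addr0 eq_sym.
  by rewrite mulf_eq0 (negbTE two0) expf_eq0 (negbTE a0) andbF.
- have t5a : tseq a b 5 = a by apply/eqP; rewrite -subr_eq0 E5 P0 !mul0r.
  have t6num : a * (a + t4 ^+ 2 + t4 * a) = b * t4.
    by apply/eqP; rewrite -subr_eq0 E6 P0 !mul0r.
  by split=> //; rewrite t6E // t6num mulfK.
Qed.

End Recurrence.

Definition uv_of (x y : CC) : CC * CC := (y / x, y / x * (1 + x)).

Lemma G_uv_of x y : x != 0 -> y != 0 -> G (uv_of x y) = uv_of y (tnext x y).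
Proof.
by move=> x0 y0; rewrite /G /uv_of /tnext /=; congr pair; field; rewrite x0 y0.
Qed.

Lemma uv_of_inj x y x' y' : y / x != 0 ->
  uv_of x y = uv_of x' y' -> x = x' /\ y = y'.
Proof.
move=> r0 [e1 e2].
have xx' : x = x' by move: e2; rewrite -e1 => /(mulfI r0) /addrI.
have x0 : x != 0 by apply: contraNneq r0 => ->; rewrite invr0 mulr0.
have x'0 : x' != 0 by rewrite -xx'.
by split=> //; rewrite -(divfK x0 y) -(divfK x'0 y') e1 xx'.
Qed.

Lemma uv_of_coords u v : u != 0 -> v != u ->
  uv_of ((v - u) / u) (v - u) = (u, v).
Proof.
move=> u0; rewrite -subr_eq0 => vu0.
by rewrite /uv_of; congr pair; field; rewrite u0 vu0.
Qed.

Lemma iter_G_uv_of a b k : (forall j, (j <= k)%N -> tseq a b j != 0) ->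
  iter k G (uv_of a b) = uv_of (tseq a b k) (tseq a b k.+1).
Proof.
elim: k => [//|k IH] t_neq0.
by rewrite iterS IH ?G_uv_of ?t_neq0 // => j /leqW; apply: t_neq0.
Qed.

Lemma tseq_neq0_of_iter a b n : a != 0 ->
    (forall k, (k < n)%N -> (iter k G (uv_of a b)).1 != 0) ->
  forall j, (j <= n)%N -> tseq a b j != 0.
Proof.
move=> a0; elim: n => [_ j | n IH fst0 j]; first by rewrite leqn0 => /eqP ->.
have t_neq0 : forall j, (j <= n)%N -> tseq a b j != 0.
  by apply: IH => k /leqW; apply: fst0.
rewrite leq_eqVlt ltnS => /orP[/eqP -> | /t_neq0 //].
have := fst0 n (ltnSn n); rewrite iter_G_uv_of //=.
by apply: contra_neq => ->; rewrite mul0r.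
Qed.

Lemma G_fixedP u v : u != 0 -> G (u, v) = (u, v) <-> v = u.
Proof.
move=> u0; rewrite /G /=; split=> [[e1 e2] | ->]; last by congr pair; field.
move/(canRL (divfK u0)): e1 => e1; move/(canRL (divfK u0)): e2 => e2.
have : (v - u) * (1 + u) = (- u + v + u * v) - u * u by ring.
rewrite e1 subrr => /eqP; rewrite mulf_eq0 subr_eq0 => /orP[/eqP // | u1].
have um1 : u = -1 by apply/eqP; rewrite -addr_eq0 addrC.
have : 2 * (v - u) = (u ^+ 2 - u + v - u ^+ 2 * v - u * v + u * v ^+ 2 + v ^+ 2)
                     - v * u.
  by rewrite um1; ring.
by rewrite e2 subrr => /eqP; rewrite mulf_eq0 pnatr_eq0 subr_eq0 => /eqP.
Qed.

Lemma exact_period_nondegenerate n u v : (1 < n)%N ->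
  exact_period n (u, v) -> u != 0 /\ v != u.
Proof.
move=> n_gt1 [fst0 [_ no_fix]]; have u0 : u != 0 := fst0 0%N (ltnW n_gt1).
split=> //; apply/eqP => vu; apply: (no_fix 1%N n_gt1).
by apply/(G_fixedP v u0).
Qed.

Lemma exact_period5_uv_ofP a b : a != 0 -> b != 0 ->
  exact_period 5 (uv_of a b) <-> P5t a b = 0.
Proof.
move=> a0 b0; have two0 : (2 : CC) != 0 by rewrite pnatr_eq0.
have ba0 : b / a != 0 by rewrite mulf_neq0 ?invr_neq0.
split=> [[fst0 [per _]] | P0].
- have t_neq0 : forall j, (j <= 6)%N -> tseq a b j != 0.
    apply: tseq_neq0_of_iter => // k; rewrite ltnS leq_eqVlt.
    by case/orP=> [/eqP -> | /fst0 //]; rewrite per.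
  have per' : uv_of (tseq a b 5) (tseq a b 6) = uv_of a b.
    by rewrite -iter_G_uv_of // => j /leqW; apply: t_neq0.
  have [|t5a t6b] := uv_of_inj _ per'.
    by rewrite mulf_neq0 ?invr_neq0 ?t_neq0.
  by apply/(tseq_period5P two0) => // j /leqW /leqW; apply: t_neq0.
- have t_neq0 := tseq_neq0 a0 b0 P0.
  have iterE k : iter k G (uv_of a b) = uv_of (tseq a b k) (tseq a b k.+1).
    by apply: iter_G_uv_of => j _; apply: t_neq0.
  have [t5a t6b] := (tseq_period5P two0 (fun j _ => t_neq0 j)).2 P0.
  have per : iter 5 G (uv_of a b) = uv_of a b by rewrite iterE t5a t6b.
  split; [move=> k _; rewrite iterE | split=> //].
    by apply: mulf_neq0; [exact: (t_neq0 k.+1) | apply/invr_neq0/(t_neq0 k)].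
  apply: (@prime_period _ G _ 5) => //; rewrite /uv_of => /(G_fixedP _ ba0) e.
  apply/(negP a0)/eqP/(mulfI ba0)/(addrI (b / a)).
  by rewrite mulr0 addr0 -{1}[b / a]mulr1 -mulrDr.
Qed.

Lemma P5_P5t u a : P5 u (u * (1 + a)) * a ^+ 5 = u ^+ 3 * P5t a (u * a).
Proof. by rewrite /P5 /P5t; ring. Qed.

Lemma P5_eq0_P5t u v : u != 0 -> v != u ->
  P5 u v = 0 <-> P5t ((v - u) / u) (v - u) = 0.
Proof.
move=> u0 vu; have vu0 : v - u != 0 by rewrite subr_eq0.
have a0 : (v - u) / u != 0 by rewrite mulf_neq0 ?invr_neq0.
have := P5_P5t u ((v - u) / u).
have -> : u * (1 + (v - u) / u) = v by field.
have -> : u * ((v - u) / u) = v - u by field.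
move=> E.
split=> P0; apply/eqP; move: E; rewrite P0 ?mul0r ?mulr0 => /eqP.
  by rewrite eq_sym mulf_eq0 expf_eq0 (negbTE u0) andbF.
by rewrite mulf_eq0 expf_eq0 (negbTE a0) andbF orbF.
Qed.

Lemma exact_period5P u v : u != 0 -> v != u ->
  exact_period 5 (u, v) <-> P5 u v = 0.
Proof.
move=> u0 vu; have vu0 : v - u != 0 by rewrite subr_eq0.
have a0 : (v - u) / u != 0 by rewrite mulf_neq0 ?invr_neq0.
by rewrite P5_eq0_P5t // -exact_period5_uv_ofP // uv_of_coords.
Qed.

Lemma P5_exact_period5 u v : exact_period 5 (u, v) -> P5 u v = 0.
Proof.
move=> per; have [u0 vu] := exact_period_nondegenerate (isT : (1 < 5)%N) per.
by apply/exact_period5P.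
Qed.

(* P5 over any commutative ring, so that it can be evaluated at polynomials. *)
Definition P5_expr (R : comNzRingType) (u v : R) : R :=
  - 3 * u^+5 * v^+6 + 3 * u^+4 * v^+2 - u^+7 * v^+2 + u * v^+3 - u^+6 * v
  - u^+5 * v + 2 * u^+3 * v - 4 * u^+3 * v^+2 - 2 * u * v^+4 + 2 * u^+4 * v
  + 6 * u^+2 * v^+4 + 2 * u^+7 * v^+3 - u^+7 * v^+4 + u^+4 * v^+7 + v^+5 + v^+7
  + u^+6 * v^+2 + 6 * u^+2 * v^+7 + 2 * v^+6 + 3 * u^+6 * v^+5
  + u^+3 + 4 * u * v^+7 + 4 * u^+3 * v^+7 - 12 * u^+4 * v^+6 + 14 * u^+5 * v^+5
  - 8 * u^+6 * v^+4 - 16 * u^+3 * v^+6 - 5 * u^+5 * v^+3 - 12 * u^+5 * v^+4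
  + 5 * u^+6 * v^+3 + 18 * u^+4 * v^+5 + 19 * u^+3 * v^+4 - 6 * u^+2 * v^+6
  + 3 * u * v^+6 + 6 * u^+4 * v^+4 - 16 * u^+4 * v^+3 + 7 * u^+5 * v^+2
  - 4 * u * v^+5 - 12 * u^+2 * v^+5 - 5 * u^+3 * v^+3 - 2 * u^+2 * v^+2
  + 4 * u^+2 * v^+3.

Lemma rmorph_P5_expr (R S : comNzRingType) (f : {rmorphism R -> S}) u v :
  f (P5_expr u v) = P5_expr (f u) (f v).
Proof.
by rewrite /P5_expr !(rmorph_nat, rmorphXn, rmorphM, rmorphN, rmorphB, rmorphD).
Qed.

Definition P5_bivariate : {poly {poly CC}} := P5_expr ('X%:P) 'X.

Lemma eval2_P5_bivariate x y : eval2 P5_bivariate (x, y) = P5 x y.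
Proof.
have horner_P5_expr (R : comNzRingType) (p q : {poly R}) z :
    (P5_expr p q).[z] = P5_expr p.[z] q.[z].
  exact: (rmorph_P5_expr (horner_eval z)).
by rewrite /eval2 /P5_bivariate !horner_P5_expr !(hornerC, hornerX).
Qed.

Lemma continuous2_at_P5 u v : continuous2_at P5 u v.
Proof.
apply: continuous2_at_eq (continuous2_at_horner2 P5_bivariate u v) => x y.
exact: eval2_P5_bivariate.
Qed.

(* The shear u = x + 2v makes the leading coefficient in v a nonzero
   constant. *)
Definition P5_sheared_coef (i : nat) (x : CC) : CC :=
  match i with
  | 0 => x^+3
  | 1 => 6*x^+2 + 2*x^+3 + 2*x^+4 - x^+5 - x^+6
  | 2 => 12*x + 10*x^+2 + 12*x^+3 - 7*x^+4 - 5*x^+5 + x^+6 - x^+7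
  | 3 => 8 + 17*x + 28*x^+2 - 21*x^+3 - 6*x^+4 + 7*x^+5 - 9*x^+6 + 2*x^+7
  | 4 => 10 + 30*x - 32*x^+2 + 11*x^+3 + 16*x^+4 - 36*x^+5 + 20*x^+6 - x^+7
  | 5 => 13 - 24*x + 38*x^+2 + 8*x^+3 - 82*x^+4 + 86*x^+5 - 11*x^+6
  | 6 => - 6 + 39*x - 22*x^+2 - 112*x^+3 + 208*x^+4 - 51*x^+5
  | 7 => 15 - 36*x - 90*x^+2 + 308*x^+3 - 129*x^+4
  | 8 => - 16 - 40*x + 280*x^+2 - 192*x^+3
  | 9 => - 8 + 144*x - 168*x^+2
  | 10 => 32 - 80*x
  | 11 => - 16
  | _ => 0
  end.

Definition P5_sheared (x : CC) : {poly CC} :=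
  \poly_(i < 12) P5_sheared_coef i x.

Lemma horner_P5_sheared x w : (P5_sheared x).[w] = P5 (x + 2 * w) w.
Proof.
by rewrite /P5_sheared horner_poly !big_ord_recr big_ord0 /= /P5; ring.
Qed.

Lemma size_P5_sheared x : size (P5_sheared x) = 12.
Proof. by rewrite /P5_sheared size_poly_eq //= oppr_eq0 pnatr_eq0. Qed.

Lemma lead_coef_P5_sheared x : lead_coef (P5_sheared x) = -16.
Proof. by rewrite /P5_sheared lead_coef_poly //= oppr_eq0 pnatr_eq0. Qed.

(* Its roots include every x such that the line u - 2v = x meets the curve
   on u = 0 or on u = v. *)
Definition exceptional : {poly CC} :=
  'X ^+ 5 * ('X - 2%:P) ^+ 2 * (1 - 'X + 'X ^+ 2 - 'X ^+ 3 + 'X ^+ 4).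

Lemma horner_exceptional x :
  exceptional.[x] = x ^+ 5 * (x - 2) ^+ 2 * (1 - x + x ^+ 2 - x ^+ 3 + x ^+ 4).
Proof.
rewrite /exceptional.
by rewrite !(hornerM, hornerD, hornerN, horner_exp, hornerX, hornerC).
Qed.

Lemma exceptional_neq0 : exceptional != 0.
Proof.
apply: contra_neq (oner_neq0 CC) => ex0.
by rewrite -(horner0 1) -ex0 horner_exceptional; ring.
Qed.

Lemma sheared_nondegenerate x w : ~~ root exceptional x ->
  P5 (x + 2 * w) w = 0 -> x + 2 * w != 0 /\ w != x + 2 * w.
Proof.
move=> nonroot P0; split; apply: contra nonroot => /eqP e.
- have -> : x = - 2 * w by rewrite -[x](addrK (2 * w)) e; ring.
  rewrite e in P0; apply/eqP; rewrite horner_exceptional.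
  rewrite (_ : _ * _ = - 128 * P5 0 w
                       * (1 + 2 * w + 4 * w ^+ 2 + 8 * w ^+ 3 + 16 * w ^+ 4)).
    by rewrite P0 mulr0 mul0r.
  by rewrite /P5; ring.
- have -> : x = - w by apply: (addIr (2 * w)); rewrite -e; ring.
  rewrite -e in P0; apply/eqP; rewrite horner_exceptional.
  rewrite (_ : _ * _ = - w ^+ 2 * (w + 2) ^+ 2 * P5 w w).
    by rewrite P0 mulr0.
  by rewrite /P5; ring.
Qed.

Lemma P5_sheared_root_near u v r : P5 u v = 0 -> 0 < r ->
  exists2 d, 0 < d & forall x, `|x - (u - 2 * v)| < d ->
    exists2 w, P5 (x + 2 * w) w = 0 & `|w - v| < r.
Proof.
move=> P0 r0.
have bound0 : 0 < 16 * r ^+ 11 by rewrite mulr_gt0 ?exprn_gt0.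
have [d d0 near] := continuous2_at_P5 u v bound0.
exists d => // x xd.
have [w root_w wv] : exists2 w, root (P5_sheared x) w & `|w - v| < r.
  apply: exists_root_near (size_P5_sheared x) r0 _.
  rewrite horner_P5_sheared lead_coef_P5_sheared normrN normr_nat.
  rewrite -[P5 _ _]subr0 -P0 near // ?subrr ?normr0 //.
  by rewrite (_ : x + 2 * v - u = x - (u - 2 * v)) //; ring.
by exists w => //; apply/eqP; rewrite -horner_P5_sheared.
Qed.

Lemma exact_period5_near u v d : P5 u v = 0 -> 0 < d ->
  exists x y, [/\ `|x - u| < d, `|y - v| < d & exact_period 5 (x, y)].
Proof.
move=> P0 d0; have r0 : 0 < d / 3 by rewrite divr_gt0.
have [d' d'0 near] := P5_sheared_root_near P0 r0.
have [rho rho0 [rho_r rho_d']] := exists_pos_le2 r0 d'0.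
have [x xu nonroot] := exists_nonroot_near (u - 2 * v) exceptional_neq0 rho0.
have [w Pw wv] := near x (lt_le_trans xu rho_d').
have [u0 uw] := sheared_nondegenerate nonroot Pw.
exists (x + 2 * w), w; split; last by apply/exact_period5P.
- rewrite (_ : x + 2 * w - u = (x - (u - 2 * v)) + 2 * (w - v)); last by ring.
  apply: le_lt_trans (ler_normD _ _) _; rewrite normrM normr_nat.
  rewrite (_ : d = d / 3 + 2 * (d / 3)); last by field.
  by apply: ltrD; [apply: lt_le_trans rho_r | rewrite ltr_pM2l].
- by apply: lt_trans wv _; rewrite ltr_pdivrMr // ltr_pMr // ltr1n.
Qed.

Theorem mainTheorem7 :
  (forall u v : CC, exact_period 5 (u, v) -> P5 u v = 0) /\
  (forall u v : CC, zariski_closure (exact_period 5) (u, v) <-> P5 u v = 0).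
Proof.
split=> [|u v]; first exact: P5_exact_period5.
split=> [closure | P0 q q_van].
  rewrite -eval2_P5_bivariate; apply: closure => -[x y] /P5_exact_period5.
  by rewrite eval2_P5_bivariate.
apply/eqP; apply: contraT => q0.
have q_pos : 0 < `|eval2 q (u, v)| by rewrite normr_gt0.
have [d d0 near] := continuous2_at_horner2 q u v q_pos.
have [x [y [xu yv per]]] := exact_period5_near P0 d0.
have := near x y xu yv.
by rewrite -/(eval2 q (x, y)) q_van // sub0r normrN ltxx.
Qed.
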